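(* Let $S$ be a finite, additively commutative, congruence-simple semiring. If the multiplication table of $S$ has two identical rows (i.e. there exist $r_1\ne r_2$ in $S$ with $r_1z=r_2z$ for all $z\in S$), or two identical columns (i.e. there exist $r_1\ne r_2$ with $zr_1=zr_2$ for all $z\in S$), then one of the following holds: (1) there exists $c\in S$ such that $xy=c$ for all $x,y\in S$; (2) $|S|=2$.
   Context: A semiring is a nonempty set $S$ with two associative binary operations $+$ and $\cdot$ satisfying both distributive laws $a(b+c)=ab+ac$ and $(a+b)c=ac+bc$; no identity elements are assumed. It is additively commutative if $(S,+)$ is commutative. A congruence relation on $S$ is an equivalence relation $\sim$ such that $x_1\sim x_2$ implies $c+x_1\sim c+x_2$, $x_1+c\sim x_2+c$, $cx_1\sim cx_2$, $x_1c\sim x_2c$ for all $c\in S$. $S$ is congruence-simple if its only congruence relations are the identity relation and $S\times S$. *)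

From mathcomp Require Import all_boot.
Set Implicit Arguments. Unset Strict Implicit. Unset Printing Implicit Defensive.

Definition is_semiring (S : Type) (add mul : S -> S -> S) : Prop :=
  (forall a b c, add a (add b c) = add (add a b) c) /\
  (forall a b c, mul a (mul b c) = mul (mul a b) c) /\
  (forall a b c, mul a (add b c) = add (mul a b) (mul a c)) /\
  (forall a b c, mul (add a b) c = add (mul a c) (mul b c)).

Definition add_commutative (S : Type) (add : S -> S -> S) : Prop :=
  forall a b, add a b = add b a.

Definition is_equivalence (S : Type) (R : S -> S -> Prop) : Prop :=
  (forall x, R x x) /\ (forall x y, R x y -> R y x) /\
  (forall x y z, R x y -> R y z -> R x z).

Definition is_congruence (S : Type) (add mul : S -> S -> S)
  (R : S -> S -> Prop) : Prop :=
  is_equivalence R /\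
  forall x1 x2 c, R x1 x2 ->
    R (add c x1) (add c x2) /\ R (add x1 c) (add x2 c) /\
    R (mul c x1) (mul c x2) /\ R (mul x1 c) (mul x2 c).

Definition congruence_simple (S : Type) (add mul : S -> S -> S) : Prop :=
  forall R : S -> S -> Prop, is_congruence add mul R ->
    (forall x y, R x y <-> x = y) \/ (forall x y, R x y).

(* Two elements with equal rows generate the congruence "equal rows", so by simplicity all rows
   coincide and x y = f y for the additive idempotent map f z = r z.  The kernel of f is again a
   congruence: if it is full the product is constant, otherwise f is the identity and x y = y.
   Then addition is idempotent, and for each a the relation "x <= a iff y <= a" is a congruence;
   it cannot be full for two distinct elements, so it is the identity for one of them and embeds
   S into bool.  Equal columns reduce to equal rows in the opposite semiring. *)

From mathcomp Require Import all_boot.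

Set Implicit Arguments.
Unset Strict Implicit.
Unset Printing Implicit Defensive.

Section Opposite.
Variables (S : Type) (add mul : S -> S -> S).

Lemma is_semiring_opp :
  is_semiring add mul -> is_semiring add (fun x y => mul y x).
Proof.
move=> [addA [mulA [mulDr mulDl]]]; split=> // ; split.
  by move=> a b c; rewrite mulA.
by split=> a b c; [rewrite mulDl | rewrite mulDr].
Qed.

Lemma congruence_simple_opp :
  congruence_simple add mul -> congruence_simple add (fun x y => mul y x).
Proof.
move=> simple R [equivR compatR]; apply: simple; split=> // x1 x2 c Rx.
by have [? [? [? ?]]] := compatR x1 x2 c Rx.
Qed.

End Opposite.

Section SimpleKernel.
Variables (S : Type) (add mul : S -> S -> S).
Hypothesis addC : add_commutative add.
Hypothesis simple : congruence_simple add mul.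

Lemma simple_ker (T : Type) (f : S -> T) :
  (forall c x1 x2, f x1 = f x2 ->
     [/\ f (add c x1) = f (add c x2), f (mul c x1) = f (mul c x2)
       & f (mul x1 c) = f (mul x2 c)]) ->
  injective f \/ (forall x y, f x = f y).
Proof.
move=> compat_f.
have kerf_cong : is_congruence add mul (fun x y => f x = f y).
  split; first by split=> //; split=> [x y -> | x y z -> ->].
  move=> x1 x2 c /(compat_f c) [fD fMl fMr].
  by rewrite (addC x1) (addC x2).
case: (simple kerf_cong) => [kerf_eq | kerf_full]; last by right.
by left=> x y /kerf_eq.
Qed.

End SimpleKernel.

Section RowCase.
Variables (S : finType) (add mul : S -> S -> S).
Hypothesis addA : forall a b c, add a (add b c) = add (add a b) c.
Hypothesis addC : add_commutative add.
Hypothesis mulA : forall a b c, mul a (mul b c) = mul (mul a b) c.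
Hypothesis mulDr : forall a b c, mul a (add b c) = add (mul a b) (mul a c).
Hypothesis mulDl : forall a b c, mul (add a b) c = add (mul a c) (mul b c).
Hypothesis simple : congruence_simple add mul.

Lemma rows_eq_all (r1 r2 : S) :
  r1 <> r2 -> (forall z, mul r1 z = mul r2 z) -> forall x y z, mul x z = mul y z.
Proof.
move=> r12 row12.
pose row x := [ffun z => mul x z].
have rowP x y : row x = row y <-> forall z, mul x z = mul y z.
  split=> [/ffunP eq_xy z | eq_xy]; last by apply/ffunP => z; rewrite !ffunE.
  by move: (eq_xy z); rewrite !ffunE.
have [row_inj | row_const] : injective row \/ forall x y, row x = row y.
- apply: (simple_ker addC simple) => c x1 x2 /rowP eq_x12.
  by split; apply/rowP => z; rewrite ?mulDl -?mulA eq_x12.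
- by case: r12; apply/row_inj/rowP.
- by move=> x y; apply/rowP.
Qed.

Lemma mul_const_or_right_zero (r : S) :
  (forall x y, mul x y = mul r y) ->
  (exists c, forall x y, mul x y = c) \/ (forall x y, mul x y = y).
Proof.
move=> mulE; pose f := mul r.
have ffK x : f (f x) = f x by rewrite /f mulA (mulE (mul r r)).
have [f_inj | f_const] : injective f \/ forall x y, f x = f y.
- apply: (simple_ker addC simple) => c x1 x2 eq_x12.
  split; last by rewrite (mulE x1) (mulE x2).
    by move: eq_x12; rewrite /f !mulDr => ->.
  by rewrite !(mulE c) -/(f x1) -/(f x2) !ffK.
- by right=> x y; rewrite mulE; apply: f_inj; apply: ffK.
- by left; exists (f r) => x y; rewrite mulE; apply: f_const.
Qed.

Section RightZero.
Hypothesis mulE : forall x y, mul x y = y.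

Lemma addxx x : add x x = x.
Proof. by rewrite -{3}(mulE (add x x) x) mulDl !mulE. Qed.

Definition below (a x : S) : bool := add x a == a.

Lemma below_add a c x : below a (add c x) = below a c && below a x.
Proof.
rewrite /below; apply/eqP/andP => [cxa | [/eqP ca /eqP xa]]; last first.
  by rewrite -addA xa ca.
split; apply/eqP; first by rewrite -{1}cxa addA addA addxx cxa.
by rewrite -{1}cxa addA (addC c x) addA addxx (addC x c) cxa.
Qed.

Lemma below_injective_or_const a :
  injective (below a) \/ forall x y, below a x = below a y.
Proof.
apply: (simple_ker addC simple) => c x1 x2 eq_x12.
by rewrite !mulE !below_add eq_x12.
Qed.

Lemma card_right_zero (r1 r2 : S) : r1 <> r2 -> #|S| = 2.
Proof.
move=> r12; apply/eqP; rewrite eqn_leq; apply/andP; split; last first.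
  by apply/card_gt1P; exists r1, r2; split=> //; apply/eqP.
have below_refl a : below a a by rewrite /below addxx.
have [inj1 | const1] := below_injective_or_const r1.
  by rewrite -card_bool; exact: leq_card inj1.
have [inj2 | const2] := below_injective_or_const r2.
  by rewrite -card_bool; exact: leq_card inj2.
have le21 : add r2 r1 = r1 by apply/eqP; rewrite -/(below r1 r2) (const1 r2 r1) below_refl.
have le12 : add r1 r2 = r2 by apply/eqP; rewrite -/(below r2 r1) (const2 r1 r2) below_refl.
by case: r12; rewrite -le21 addC le12.
Qed.

End RightZero.
End RowCase.

Lemma equal_rows_dichotomy (S : finType) (add mul : S -> S -> S) :
  is_semiring add mul ->
  add_commutative add ->
  congruence_simple add mul ->
  (exists r1 r2 : S, r1 <> r2 /\ forall z, mul r1 z = mul r2 z) ->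
  (exists c : S, forall x y, mul x y = c) \/ #|S| = 2.
Proof.
move=> [addA [mulA [mulDr mulDl]]] addC simple [r1 [r2 [r12 row12]]].
have rows_eq := rows_eq_all addC mulA mulDl simple r12 row12.
have [const | right_zero] := mul_const_or_right_zero addC mulA mulDr simple (rows_eq^~ r1).
  by left.
by right; apply: (card_right_zero addA addC mulDl simple right_zero r12).
Qed.

Theorem lemma2p1 (S : finType) (add mul : S -> S -> S) :
  is_semiring add mul ->
  add_commutative add ->
  congruence_simple add mul ->
  ((exists r1 r2 : S, r1 <> r2 /\ forall z, mul r1 z = mul r2 z) \/
   (exists r1 r2 : S, r1 <> r2 /\ forall z, mul z r1 = mul z r2)) ->
  (exists c : S, forall x y, mul x y = c) \/ #|S| = 2.
Proof.
move=> semiring addC simple [rows | cols]; first exact: (equal_rows_dichotomy semiring addC simple rows).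
have [[c mulc] | card2] :=
  equal_rows_dichotomy (is_semiring_opp semiring) addC (congruence_simple_opp simple) cols.
  by left; exists c => x y; exact: mulc.
by right.
Qed.
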